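(* Let $\mathcal{G}$ be a finite connected undirected simple graph with vertices $1,\dots,N$ and let $Z,Z'\in\mathbf{Z}^N$. Then $\Phi_h(K,\mathcal{G},Z)=\Phi_h(K,\mathcal{G},Z')$ for every integer $K\ge 2$ and every $K$-harmonic function $h$ on $\mathcal{G}$ if and only if there exists an integer vector $U\in\mathbf{Z}^N$ with $Z'=Z+\nabla^2 U$. Consequently a map $\eta:\mathbf{Z}^N\to\mathbf{Z}^N$ is isoinvariant if and only if for every $Z$ one has $\eta(Z)=Z+\nabla^2U$ for some $U\in\mathbf{Z}^N$ (depending on $Z$).
   Context: $d_i$ is the degree of vertex $i$; the Laplacian $\nabla^2$ is the $N\times N$ integer matrix with $\nabla^2_{ii}=d_i$, $\nabla^2_{ij}=-1$ if $i\sim j$ (adjacent), $0$ otherwise. $\mathbf{Z}_K=\{0,\dots,K-1\}$. A function $h:\{1,\dots,N\}\to\mathbf{Z}_K$ is $K$-harmonic if $(\nabla^2 h)(i)\equiv 0\pmod K$ for all $i$. For a configuration $Z=(z(1),\dots,z(N))\in\mathbf{Z}^N$, $\Phi_h(K,\mathcal{G},Z)=\left(\sum_i h(i)z(i)\right)\bmod K$. A map $\eta:\mathbf{Z}^N\to\mathbf{Z}^N$ is called isoinvariant if $\Phi_h(K,\mathcal{G},\eta(Z))=\Phi_h(K,\mathcal{G},Z)$ for all $Z$, all integers $K\ge2$ and all $K$-harmonic $h$. *)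

From mathcomp Require Import all_boot all_order all_algebra.
Set Implicit Arguments. Unset Strict Implicit. Unset Printing Implicit Defensive.
Import Order.TTheory GRing.Theory Num.Theory.
Local Open Scope ring_scope.

(* A finite simple undirected graph on vertices 'I_N (vertex i <-> i+1 in the
   paper) is given by an adjacency relation e which is symmetric and irreflexive. *)
Definition simple_graph N (e : rel 'I_N) : Prop :=
  symmetric e /\ irreflexive e.

Definition connected_graph N (e : rel 'I_N) : Prop :=
  forall i j : 'I_N, connect e i j.

Definition deg N (e : rel 'I_N) (i : 'I_N) : nat := #|[pred j | e i j]|.

Definition laplacian N (e : rel 'I_N) : 'M[int]_N :=
  \matrix_(i, j) (if i == j then (deg e i)%:Z else if e i j then -1 else 0).

Definition lap_apply N (e : rel 'I_N) (u : 'I_N -> int) (i : 'I_N) : int :=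
  \sum_(j < N) laplacian e i j * u j.

(* h : vertices -> Z_K, represented by integer values in {0,...,K-1}. *)
Definition K_harmonic N (e : rel 'I_N) (K : int) (h : 'I_N -> int) : Prop :=
  (forall i, 0 <= h i < K) /\ (forall i, (K %| lap_apply e h i)%Z).

Definition Phi N (h : 'I_N -> int) (K : int) (z : 'I_N -> int) : int :=
  ((\sum_(i < N) h i * z i) %% K)%Z.

Definition isoinvariant N (e : rel 'I_N) (eta : ('I_N -> int) -> ('I_N -> int)) : Prop :=
  forall (z : 'I_N -> int) (K : int) (h : 'I_N -> int),
    2 <= K -> K_harmonic e K h -> Phi h K (eta z) = Phi h K z.

(* A vector w lies in the integer column space of a square integer matrix A
   iff h w = 0 mod K for every K >= 2 and every row vector h with h A = 0 mod K.
   One direction is h (A y) = (h A) y. For the other, write A = L D R in Smith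
   normal form; if w is not in the image then some diagonal entry d_i does not
   divide the i-th coordinate of L^-1 w, and a modulus K dividing d_i but not
   that coordinate makes the i-th row of L^-1 a witness. For the graph
   Laplacian, which is symmetric, such row vectors reduced mod K are exactly
   the K-harmonic functions. *)

From mathcomp Require Import all_boot all_order all_algebra.
Import Order.TTheory GRing.Theory Num.Theory.
Local Open Scope ring_scope.

Lemma dvdz_sum_mul_modz n (K : int) (a b : 'I_n -> int) :
  (K %| \sum_j a j * (b j %% K)%Z)%Z = (K %| \sum_j a j * b j)%Z.
Proof.
have dvd_diff : (K %| \sum_j a j * (b j %% K)%Z - \sum_j a j * b j)%Z.
  rewrite -sumrB; apply: rpred_sum => j _; rewrite -mulrBr dvdz_mull //.
  have -> : (b j %% K)%Z - b j = - ((b j %/ K)%Z * K).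
    by rewrite {2}(divz_eq (b j) K) opprD addrCA subrr addr0.
  by rewrite rpredN dvdz_mull.
by rewrite -[X in (K %| X)%Z](subrK (\sum_j a j * b j)) rpredDl.
Qed.

Lemma nondivisor_witness (d v : int) : ~~ (d %| v)%Z ->
  exists2 K : int, 2 <= K & (K %| d)%Z && ~~ (K %| v)%Z.
Proof.
move=> ndv; have [d0 | nz_d] := eqVneq d 0.
  have nz_v : `|v|%N != 0%N by move: ndv; rewrite d0 dvd0z absz_eq0.
  exists (`|v|.+1)%:Z; first by rewrite lez_nat ltnS lt0n.
  rewrite d0 dvdz0 /= dvdzE /=; apply/negP => /dvdn_leq.
  by rewrite lt0n ltnn => /(_ nz_v).
have nz_absd : `|d|%N != 0%N by rewrite absz_eq0.
have ne1_absd : `|d|%N != 1%N.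
  by apply: contra ndv => /eqP d1; rewrite dvdzE d1 dvd1n.
exists `|d|%:Z; last by rewrite !dvdzE /= dvdnn.
by rewrite lez_nat; case: (`|d|%N) nz_absd ne1_absd => [|[|]].
Qed.

Section IntegerColumnSpace.

Context {n : nat} (A : 'M[int]_n).

Definition mod_left_kernel (K : int) (h : 'rV[int]_n) : Prop :=
  forall j, (K %| (h *m A) ord0 j)%Z.

Lemma mod_left_kernel_image (K : int) h (y : 'cV[int]_n) :
  mod_left_kernel K h -> (K %| (h *m (A *m y)) ord0 ord0)%Z.
Proof. by move=> hA; rewrite mulmxA mxE; apply: rpred_sum => j _; apply: dvdz_mulr. Qed.

Lemma mod_orthogonal_image (w : 'cV[int]_n) :
  (forall K h, 2 <= K -> mod_left_kernel K h -> (K %| (h *m w) ord0 ord0)%Z) ->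
  exists y, A *m y = w.
Proof.
move=> orth_w.
have [L uL [R uR [d _ defA]]] := int_Smith_normal_form A.
set D := \matrix_(i, j) _ in defA.
have defD : D = diag_mx (\row_i d`_i) by apply/matrixP => i j; rewrite !mxE.
set v := invmx L *m w.
suff dvd_v i : (d`_i %| v i ord0)%Z.
  exists (invmx R *m \col_i (v i ord0 %/ d`_i)%Z).
  rewrite defA -!mulmxA (mulmxA R) mulmxV // mul1mx.
  have -> : D *m \col_i (v i ord0 %/ d`_i)%Z = v.
    apply/matrixP => i j; rewrite (ord1 j) defD mul_diag_mx !mxE mulrC.
    by have := dvd_v i; rewrite mxE => /divzK.
  by rewrite /v mulmxA mulmxV // mul1mx.
apply/contraT => /nondivisor_witness[K K2 /andP[K_d K_nv]].
case/negP: K_nv.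
have -> : v i ord0 = (row i (invmx L) *m w) ord0 ord0.
  by rewrite -row_mul !mxE.
apply: orth_w => // j.
have LA : invmx L *m A = D *m R by rewrite defA !mulmxA mulVmx // mul1mx.
by rewrite -row_mul mxE LA defD mul_diag_mx !mxE dvdz_mulr.
Qed.

Lemma int_column_spaceP (w : 'cV[int]_n) :
  (exists y, A *m y = w) <->
  (forall K h, 2 <= K -> mod_left_kernel K h -> (K %| (h *m w) ord0 ord0)%Z).
Proof.
split; last exact: mod_orthogonal_image.
by move=> [y <-] K h _; apply: mod_left_kernel_image.
Qed.

End IntegerColumnSpace.

Lemma Phi_eq_dvdz N (h : 'I_N -> int) (K : int) z z' :
  Phi h K z = Phi h K z' <-> (K %| \sum_i h i * (z' i - z i))%Z.
Proof.
rewrite /Phi; have -> : \sum_i h i * (z' i - z i) =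
    - (\sum_i h i * z i - \sum_i h i * z' i).
  by rewrite opprB -sumrB; apply: eq_bigr => i _; rewrite mulrBr.
by rewrite rpredN -eqz_mod_dvd; split => /eqP.
Qed.

Section GraphLaplacian.

Context {N : nat} {e : rel 'I_N}.
Hypothesis simple_e : simple_graph e.

Lemma laplacian_sym i j : laplacian e i j = laplacian e j i.
Proof.
have [sym_e _] := simple_e; rewrite !mxE.
by case: (eqVneq i j) => [-> // | ne_ij]; rewrite sym_e.
Qed.

Lemma lap_applyE (u : 'I_N -> int) i :
  lap_apply e u i = (laplacian e *m \col_j u j) i ord0.
Proof. by rewrite [RHS]mxE; apply: eq_bigr => j _; rewrite !mxE. Qed.

Lemma row_mul_laplacian (h : 'I_N -> int) i :
  (\row_j h j *m laplacian e) ord0 i = lap_apply e h i.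
Proof.
rewrite [LHS]mxE; apply: eq_bigr => j _.
by rewrite laplacian_sym mulrC !mxE.
Qed.

Lemma K_harmonic_mod_left_kernel (K : int) h :
  K_harmonic e K h -> mod_left_kernel (laplacian e) K (\row_j h j).
Proof. by move=> [_ harm_h] i; rewrite row_mul_laplacian. Qed.

Lemma mod_left_kernel_K_harmonic (K : int) (h : 'rV[int]_N) :
  0 < K -> mod_left_kernel (laplacian e) K h ->
  K_harmonic e K (fun j => (h ord0 j %% K)%Z).
Proof.
move=> K_gt0 hA; split=> [j | i]; first by rewrite modz_ge0 ?ltz_pmod ?gt_eqF.
rewrite /lap_apply dvdz_sum_mul_modz.
have := hA i; rewrite mxE; congr (_ %| _)%Z; apply: eq_bigr => j _.
by rewrite mulrC laplacian_sym.
Qed.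

Lemma lap_translate_col_spaceP (z z' : 'I_N -> int) :
  (exists u, forall i, z' i = z i + lap_apply e u i) <->
  (exists y, laplacian e *m y = \col_i (z' i - z i)).
Proof.
split=> [[u defz'] | [y defw]].
  exists (\col_j u j); apply/matrixP => i j.
  by rewrite (ord1 j) -lap_applyE mxE defz' addrC addKr.
exists (fun j => y j ord0) => i; rewrite lap_applyE.
have -> : \col_j y j ord0 = y by apply/matrixP => j k; rewrite (ord1 k) mxE.
by rewrite defw mxE addrC subrK.
Qed.

Lemma K_harmonic_Phi_mod_left_kernelP (z z' : 'I_N -> int) :
  (forall (K : int) h, 2 <= K -> K_harmonic e K h -> Phi h K z = Phi h K z') <->
  (forall (K : int) h, 2 <= K -> mod_left_kernel (laplacian e) K h ->
     (K %| (h *m \col_i (z' i - z i)) ord0 ord0)%Z).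
Proof.
set w := \col_i (z' i - z i).
have row_mul_w (h : 'rV[int]_N) :
    (h *m w) ord0 ord0 = \sum_i h ord0 i * (z' i - z i).
  by rewrite mxE; apply: eq_bigr => i _; rewrite mxE.
split=> [Phi_zz' K h K2 hA | orth_w K h K2 harm_h].
  have K_gt0 : 0 < K by apply: lt_le_trans K2.
  have := Phi_zz' K _ K2 (mod_left_kernel_K_harmonic _ _ K_gt0 hA).
  move/Phi_eq_dvdz; rewrite row_mul_w.
  under eq_bigr do rewrite mulrC.
  by rewrite dvdz_sum_mul_modz; under eq_bigr do rewrite mulrC.
apply/Phi_eq_dvdz.
have := orth_w K _ K2 (K_harmonic_mod_left_kernel _ _ harm_h).
by rewrite row_mul_w; under eq_bigr do rewrite mxE.
Qed.

Lemma laplacian_translateP (z z' : 'I_N -> int) :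
  (forall (K : int) h, 2 <= K -> K_harmonic e K h -> Phi h K z = Phi h K z') <->
  (exists u, forall i, z' i = z i + lap_apply e u i).
Proof.
exact: iff_trans (K_harmonic_Phi_mod_left_kernelP z z')
  (iff_trans (iff_sym (int_column_spaceP (laplacian e) _))
             (iff_sym (lap_translate_col_spaceP z z'))).
Qed.

End GraphLaplacian.

Theorem theorem2 (N : nat) (e : rel 'I_N) :
  simple_graph e -> connected_graph e ->
  (forall z z' : 'I_N -> int,
     (forall (K : int) (h : 'I_N -> int), 2 <= K -> K_harmonic e K h ->
        Phi h K z = Phi h K z') <->
     (exists u : 'I_N -> int, forall i, z' i = z i + lap_apply e u i))
  /\
  (forall eta : ('I_N -> int) -> ('I_N -> int),
     isoinvariant e eta <->
     (forall z, exists u : 'I_N -> int, forall i, eta z i = z i + lap_apply e u i)).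
Proof.
move=> simple_e _; have translateP := laplacian_translateP simple_e.
split=> // eta; split=> [iso_eta z | translate_eta z K h K2 harm_h].
  by apply/translateP => K h K2 harm_h; rewrite (iso_eta z K h K2 harm_h).
by symmetry; apply: (proj2 (translateP z (eta z)) (translate_eta z)).
Qed.
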